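(* The map $f_I: W^I\times P^+\to P_I^+$, $f_I(v,\sigma)=v^{-1}(\lambda_v+\sigma)$, is well defined and is a bijection.
   Context: Let $\mathfrak a$ be a Euclidean space with inner product $(\cdot,\cdot)$ and $R\subset\mathfrak a^*$ a root system with Weyl group $W$; for $\alpha\in R$ put $\alpha^\vee=2\alpha/(\alpha,\alpha)$. Fix positive roots $R^+$ with simple roots $\Pi$ and simple reflections $S$; write $\beta<0$ if $\beta\in -R^+$ and $\beta>0$ if $\beta\in R^+$. Let $P=\{\lambda\in\mathfrak a^*:(\lambda,\alpha^\vee)\in\mathbb Z\ \forall\alpha\in R\}$ be the weight lattice, $P^+=\{\lambda\in P:(\lambda,\alpha^\vee)\ge0\ \forall\alpha\in\Pi\}$ the dominant weights, and for $\alpha\in\Pi$ let $\varpi_\alpha\in P$ be the fundamental weight, $(\varpi_\alpha,\beta^\vee)=\delta_{\alpha\beta}$ for $\beta\in\Pi$. Let $I\subset S$, $W_I$ the parabolic subgroup generated by $I$, $R_I\subset R$ its set of roots and $R_I^+=R_I\cap R^+$. Let $W^I=\{v\in W: v(R_I^+)\subset R^+\}$ (the minimal length representatives of $W/W_I$) and $P_I^+=\{\lambda\in P:(\lambda,\alpha)\ge0\ \forall \alpha\in R_I^+\}$. For $v\in W$ the Steinberg weight is $\lambda_v=\sum_{\alpha\in\Pi,\ v^{-1}\alpha<0}\varpi_\alpha\in P^+$. *)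

(* Euclidean space = 'rV[R]_n over R : realType with the
   standard dot product; roots, weights and W-elements are row vectors /
   matrices acting on the right (x |-> x *m M). *)
From HB Require Import structures.
From mathcomp Require Import all_boot all_order all_algebra.
From mathcomp Require Import reals.
Set Implicit Arguments. Unset Strict Implicit. Unset Printing Implicit Defensive.
Import Order.TTheory GRing.Theory Num.Theory.
Local Open Scope ring_scope.

Section RootSystems.
Variables (R : realType) (n : nat).
Implicit Types (x y a b : 'rV[R]_n) (rs J : seq 'rV[R]_n) (xi : 'rV[R]_n).

Definition dot x y : R := \sum_(i < n) x 0 i * y 0 i.

Definition coroot a : 'rV[R]_n := (2 / dot a a) *: a.

Definition refl a : 'M[R]_n := 1%:M - (coroot a)^T *m a.
Definition sact x a := x - dot x (coroot a) *: a.

Definition is_intR (r : R) : Prop := exists z : int, r = z%:~R.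

Definition root_system rs : Prop :=
  uniq rs /\
  [/\ (0 : 'rV[R]_n) \notin rs,
      (<<rs>>%VS = fullv),
      (forall a b, a \in rs -> b \in rs -> sact b a \in rs),
      (forall a b, a \in rs -> b \in rs -> is_intR (dot b (coroot a)))
    & (forall a (c : R), a \in rs -> c *: a \in rs -> c = 1 \/ c = -1)].

Definition regular rs xi : Prop := forall a, a \in rs -> dot a xi != 0.

Definition posr rs xi a : bool := (a \in rs) && (0 < dot a xi).
Definition negr rs xi a : bool := (a \in rs) && (dot a xi < 0).

Definition simple rs xi a : bool :=
  posr rs xi a && ~~ has (fun b => posr rs xi b && posr rs xi (a - b)) rs.

Inductive weyl rs : 'M[R]_n -> Prop :=
  | weyl1 : weyl rs 1%:M
  | weylS a w : a \in rs -> weyl rs w -> weyl rs (refl a *m w).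

Definition wact (w : 'M[R]_n) x : 'rV[R]_n := x *m w.

Definition rootsI rs J a : bool := (a \in rs) && (a \in <<J>>%VS).
Definition posI rs xi J a : bool := rootsI rs J a && posr rs xi a.

(* minimal length coset representatives W^J *)
Definition WI rs xi J (v : 'M[R]_n) : Prop :=
  weyl rs v /\ forall a, posI rs xi J a -> posr rs xi (wact v a).

Definition weight rs l : Prop := forall a, a \in rs -> is_intR (dot l (coroot a)).
Definition dominant rs xi l : Prop :=
  weight rs l /\ forall a, simple rs xi a -> 0 <= dot l (coroot a).
Definition dominantI rs xi J l : Prop :=
  weight rs l /\ forall a, posI rs xi J a -> 0 <= dot l a.

Definition fund_weights rs xi (fw : 'rV[R]_n -> 'rV[R]_n) : Prop :=
  forall a, simple rs xi a ->
    weight rs (fw a) /\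
    forall b, simple rs xi b -> dot (fw a) (coroot b) = (a == b)%:R.

Definition steinberg rs xi fw (v : 'M[R]_n) : 'rV[R]_n :=
  \sum_(a <- rs | simple rs xi a && negr rs xi (wact (invmx v) a)) fw a.

Definition fI rs xi fw (v : 'M[R]_n) sigma : 'rV[R]_n :=
  wact (invmx v) (steinberg rs xi fw v + sigma).

End RootSystems.

(* Put nu = lambda_v + sigma, a dominant weight, so that f(v, sigma) = v^-1 nu.
   Since nu is nonnegative on R^+, v^-1 nu is nonnegative on v^-1 R^+, which contains
   R_I^+ when v is in W^I.
   If beta > 0 and (nu, beta) = 0, then beta is a sum of simple roots alpha with
   (lambda_v, alpha^v) = 0, i.e. with v^-1 alpha > 0, hence v^-1 beta > 0.  Therefore
   v^-1 R^+ is the set of roots that are positive for mu + eps xi, where mu = f(v, sigma)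
   and eps > 0 is infinitesimal; as only the identity of W preserves R^+ (deletion
   property of words in simple reflections), mu determines v, and then sigma.
   Conversely, given mu in P_I^+, multiplying by a suitable simple reflection shrinks the
   set of positive roots sent off the positive side of mu + eps xi, until v^-1 R^+ lies
   on that side.  Then v mu is dominant and (v mu, alpha^v) is a positive integer
   whenever v^-1 alpha < 0, so sigma = v mu - lambda_v is dominant, and v is in W^I
   because mu >= 0 on R_I^+. *)

From Pilot Require Import Defs.
From HB Require Import structures.
From mathcomp Require Import all_boot all_order all_algebra.
From mathcomp Require Import reals.
From mathcomp Require Import ring lra zify.
Set Implicit Arguments. Unset Strict Implicit. Unset Printing Implicit Defensive.
Import Order.TTheory GRing.Theory Num.Theory.
Local Open Scope ring_scope.

Lemma sub_count_lt (T : eqType) (p q : pred T) (s : seq T) (x : T) :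
  subpred p q -> x \in s -> q x -> ~~ p x -> (count p s < count q s)%N.
Proof.
move=> pq xs qx npx.
have eq_q : predU p (predD q p) =1 q.
  by move=> y /=; case: (boolP (p y)) => [/pq ->|].
have eq_0 : predI p (predD q p) =1 pred0 by move=> y /=; case: (p y).
have := count_predUI p (predD q p) s.
rewrite (eq_count eq_q) (eq_count eq_0) count_pred0 addn0 => ->.
by rewrite -ltn_subLR // subnn -has_count; apply/hasP; exists x; rewrite //= npx.
Qed.

Lemma psumr_gt0 (R : numDomainType) (I : eqType) (r : seq I) (P : pred I)
    (F : I -> R) :
  (forall i, P i -> 0 <= F i) -> has (fun i => P i && (0 < F i)) r ->
  0 < \sum_(i <- r | P i) F i.
Proof. by move=> F_ge0 hasF; rewrite lt_def psumr_neq0 // hasF sumr_ge0. Qed.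

Lemma sum_indicator_uniq (R : pzSemiRingType) (T : eqType) (s : seq T) (P : pred T)
    (x : T) :
  uniq s -> \sum_(a <- s | P a) (a == x)%:R = (P x && (x \in s))%:R :> R.
Proof.
elim: s => [|y s IH] /=; first by rewrite big_nil andbF.
case/andP => ys us; rewrite big_cons IH // in_cons.
have [<-|yx] := eqVneq y x; last by case: (P y); rewrite /= ?add0r.
by rewrite (negbTE ys) !andbF /=; case: (P y); rewrite ?addr0.
Qed.

Section InnerProduct.
Variables (R : realType) (n : nat).
Implicit Types (x y z : 'rV[R]_n) (g : 'M[R]_n).

Lemma dotE x y : dot x y = (x *m y^T) 0 0.
Proof. by rewrite /dot !mxE; apply: eq_bigr => i _; rewrite mxE. Qed.

Lemma dotC x y : dot x y = dot y x.
Proof. by apply: eq_bigr => i _; rewrite mulrC. Qed.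

Lemma dotDl x y z : dot (x + y) z = dot x z + dot y z.
Proof. by rewrite !dotE mulmxDl mxE. Qed.

Lemma dotZl (c : R) x y : dot (c *: x) y = c * dot x y.
Proof. by rewrite !dotE -scalemxAl mxE. Qed.

Lemma dotNl x y : dot (- x) y = - dot x y.
Proof. by rewrite !dotE mulNmx mxE. Qed.

Lemma dotBl x y z : dot (x - y) z = dot x z - dot y z.
Proof. by rewrite dotDl dotNl. Qed.

Lemma dot0l x : dot 0 x = 0.
Proof. by rewrite dotE mul0mx mxE. Qed.

Lemma dotDr x y z : dot z (x + y) = dot z x + dot z y.
Proof. by rewrite dotC dotDl !(dotC z). Qed.

Lemma dotZr (c : R) x y : dot y (c *: x) = c * dot y x.
Proof. by rewrite dotC dotZl dotC. Qed.

Lemma dotNr x y : dot y (- x) = - dot y x.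
Proof. by rewrite dotC dotNl dotC. Qed.

Lemma dotBr x y z : dot z (x - y) = dot z x - dot z y.
Proof. by rewrite dotDr dotNr. Qed.

Lemma dot_suml (I : Type) (s : seq I) (P : pred I) (F : I -> 'rV[R]_n) y :
  dot (\sum_(i <- s | P i) F i) y = \sum_(i <- s | P i) dot (F i) y.
Proof. by elim/big_rec2: _ => [|i u v _ <-]; rewrite ?dot0l ?dotDl. Qed.

Lemma dot_sumr (I : Type) (s : seq I) (P : pred I) (F : I -> 'rV[R]_n) y :
  dot y (\sum_(i <- s | P i) F i) = \sum_(i <- s | P i) dot y (F i).
Proof. by rewrite dotC dot_suml; apply: eq_bigr => i _; apply: dotC. Qed.

Lemma dotxx_gt0 x : x != 0 -> 0 < dot x x.
Proof.
have sq_ge0 i : 0 <= x 0 i * x 0 i by rewrite -expr2 sqr_ge0.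
move=> x0; rewrite lt_def sumr_ge0 // andbT /dot psumr_eq0 //.
apply: contra x0 => /allP x0; apply/eqP/rowP => i; rewrite mxE.
by have := x0 i (mem_index_enum i); rewrite /= -expr2 sqrf_eq0 => /eqP.
Qed.

Lemma dot_mulmxl x y g : dot (x *m g) y = dot x (y *m g^T).
Proof. by rewrite !dotE trmx_mul trmxK mulmxA. Qed.

Lemma sqr_dot_lt x y : y != 0 -> (forall t : R, x != t *: y) ->
  dot x y ^+ 2 < dot x x * dot y y.
Proof.
move=> y0 noncol; set t := dot x y / dot y y.
have yy0 : 0 < dot y y := dotxx_gt0 y0.
have : 0 < dot y y * dot (x - t *: y) (x - t *: y).
  by rewrite mulr_gt0 ?dotxx_gt0 // subr_eq0 noncol.
rewrite !(dotBl, dotBr, dotZl, dotZr) (dotC y x) /t.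
set A := dot x x; set B := dot y y; set C := dot x y.
suff -> : B * (A - C / B * C - C / B * (C - C / B * B)) = A * B - C ^+ 2.
  by rewrite subr_gt0.
by field; rewrite gt_eqF.
Qed.

End InnerProduct.

Section Reflections.
Variables (R : realType) (n : nat).
Implicit Types (x a : 'rV[R]_n) (g h : 'M[R]_n).

Lemma eq_mx_rowact g h : (forall x, x *m g = x *m h) -> g = h.
Proof. by move=> gh; apply/row_matrixP => i; rewrite !rowE gh. Qed.

Lemma mul_refl x a : x *m refl a = sact x a.
Proof.
rewrite /refl mulmxBr mulmx1 mulmxA [x *m _]mx11_scalar -dotE.
by rewrite mul_scalar_mx.
Qed.

Lemma dot_coroot x a : dot x (coroot a) = 2 / dot a a * dot x a.
Proof. by rewrite /coroot dotZr. Qed.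

Lemma dot_coroot_id a : a != 0 -> dot a (coroot a) = 2.
Proof. by move=> a0; rewrite dot_coroot mulfVK // gt_eqF ?dotxx_gt0. Qed.

Lemma sact_id a : a != 0 -> sact a a = - a.
Proof. by move=> a0; rewrite /sact dot_coroot_id // scaler_nat mulr2n opprD addNKr. Qed.

Lemma refl_invol a : a != 0 -> refl a *m refl a = 1%:M.
Proof.
move=> a0; apply: eq_mx_rowact => x; rewrite mulmxA !mul_refl mulmx1 /sact.
by rewrite dotBl dotZl dot_coroot_id //; apply/rowP => i; rewrite !mxE; ring.
Qed.

Lemma trmx_refl a : (refl a)^T = refl a.
Proof.
rewrite /refl /coroot linearB /= trmx1 trmx_mul trmxK; congr (_ - _).
by rewrite -scalemxAr [X in _ = X *m _]linearZ /= -scalemxAl.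
Qed.

Lemma refl_opp a : refl (- a) = refl a.
Proof.
apply: eq_mx_rowact => x; rewrite !mul_refl /sact /coroot dotNl dotNr opprK.
by rewrite !scalerN dotNr scaleNr opprK.
Qed.

Definition orthogonal_mx g := g *m g^T = 1%:M.

Lemma orthogonal_mx1 : orthogonal_mx 1%:M.
Proof. by rewrite /orthogonal_mx trmx1 mulmx1. Qed.

Lemma orthogonal_mxM g h :
  orthogonal_mx g -> orthogonal_mx h -> orthogonal_mx (g *m h).
Proof.
rewrite /orthogonal_mx trmx_mul => gg hh.
by rewrite mulmxA -(mulmxA g) hh mulmx1 gg.
Qed.

Lemma orthogonal_refl a : a != 0 -> orthogonal_mx (refl a).
Proof. by move=> a0; rewrite /orthogonal_mx trmx_refl refl_invol. Qed.

Lemma orthogonal_mxT g : orthogonal_mx g -> g^T *m g = 1%:M.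
Proof. exact: mulmx1C. Qed.

Lemma orthogonal_trmx g : orthogonal_mx g -> orthogonal_mx g^T.
Proof. by move=> gg; rewrite /orthogonal_mx trmxK orthogonal_mxT. Qed.

Lemma orthogonal_invmx g : orthogonal_mx g -> invmx g = g^T.
Proof.
move=> gg; have [gu _] := mulmx1_unit gg.
by rewrite -[LHS]mulmx1 -gg mulmxA mulVmx // mul1mx.
Qed.

Lemma dot_orthogonal g x y : orthogonal_mx g -> dot (x *m g) (y *m g) = dot x y.
Proof. by move=> gg; rewrite dot_mulmxl -mulmxA gg mulmx1. Qed.

Lemma coroot_orthogonal g a : orthogonal_mx g -> coroot (a *m g) = coroot a *m g.
Proof. by move=> gg; rewrite /coroot dot_orthogonal // scalemxAl. Qed.

Lemma refl_conj g a : orthogonal_mx g -> refl (a *m g) = g^T *m refl a *m g.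
Proof.
move=> gg; apply: eq_mx_rowact => x; rewrite mul_refl !mulmxA mul_refl /sact.
rewrite mulmxBl -scalemxAl -mulmxA orthogonal_mxT // mulmx1.
by rewrite coroot_orthogonal // dot_mulmxl trmxK.
Qed.

End Reflections.

Section RootSystem.
Variables (R : realType) (n : nat) (rs : seq 'rV[R]_n) (xi : 'rV[R]_n).
Hypothesis rsP : root_system rs.
Hypothesis xi_reg : regular rs xi.
Implicit Types (x a b c d : 'rV[R]_n) (g h v w : 'M[R]_n) (l s : seq 'rV[R]_n).

Local Notation posr := (posr rs xi).
Local Notation negr := (negr rs xi).
Local Notation simple := (simple rs xi).

Lemma root_uniq : uniq rs. Proof. by case: rsP. Qed.

Lemma root_neq0 a : a \in rs -> a != 0.
Proof. by case: rsP => _ [rs0 _ _ _ _] ar; apply: contraNneq rs0 => <-. Qed.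

Lemma root_refl a b : a \in rs -> b \in rs -> b *m refl a \in rs.
Proof. by case: rsP => _ [_ _ rs_sact _ _] ar br; rewrite mul_refl rs_sact. Qed.

Lemma root_cartan_int a b : a \in rs -> b \in rs -> is_intR (dot b (coroot a)).
Proof. by case: rsP => _ [_ _ _ rs_int _]; apply: rs_int. Qed.

Lemma root_scale a (t : R) : a \in rs -> t *: a \in rs -> t = 1 \/ t = -1.
Proof. by case: rsP => _ [_ _ _ _ rs_red]; apply: rs_red. Qed.

Lemma rootN a : (- a \in rs) = (a \in rs).
Proof.
suff rootN a' : a' \in rs -> - a' \in rs by apply/idP/idP => /rootN; rewrite ?opprK.
by move=> ar; rewrite -(sact_id (root_neq0 ar)) -mul_refl root_refl.
Qed.

Lemma coroot_ge0 x a : a \in rs -> (0 <= dot x (coroot a)) = (0 <= dot x a).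
Proof. by move=> ar; rewrite dot_coroot pmulr_rge0 // divr_gt0 ?dotxx_gt0 ?root_neq0. Qed.

Lemma coroot_gt0 x a : a \in rs -> (0 < dot x (coroot a)) = (0 < dot x a).
Proof. by move=> ar; rewrite dot_coroot pmulr_rgt0 // divr_gt0 ?dotxx_gt0 ?root_neq0. Qed.

Lemma coroot_eq0 x a : a \in rs -> (dot x (coroot a) == 0) = (dot x a == 0).
Proof.
by move=> ar; rewrite dot_coroot mulf_eq0 gt_eqF ?divr_gt0 ?dotxx_gt0 ?root_neq0.
Qed.

Lemma posr_root a : posr a -> a \in rs. Proof. by case/andP. Qed.
Lemma posr_gt0 a : posr a -> 0 < dot a xi. Proof. by case/andP. Qed.
Lemma simple_posr a : simple a -> posr a. Proof. by case/andP. Qed.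
Lemma simple_root a : simple a -> a \in rs. Proof. by move/simple_posr/posr_root. Qed.

Lemma posrVnegr a : a \in rs -> posr a || negr a.
Proof. by move=> ar; rewrite /Defs.posr /Defs.negr ar /= orbC -neq_lt xi_reg. Qed.

Lemma negrNposr a : a \in rs -> negr a = ~~ posr a.
Proof.
move=> ar; rewrite /Defs.posr /Defs.negr ar /= -leNgt le_eqVlt.
by rewrite (negbTE (xi_reg ar)).
Qed.

Lemma posrN a : posr (- a) = negr a.
Proof. by rewrite /Defs.posr /Defs.negr rootN dotNl oppr_gt0. Qed.

Lemma posr_ind (P : 'rV[R]_n -> Prop) :
  (forall b, posr b -> (forall c, posr c -> dot c xi < dot b xi -> P c) -> P b) ->
  forall b, posr b -> P b.
Proof.
move=> IH b; pose m b := count (fun c => posr c && (dot c xi < dot b xi)) rs.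
move: {2}(m b).+1 (ltnSn (m b)) => N.
elim: N b => // N IHN b lt_bN pb; apply: IH => // c pc lt_cb; apply: IHN => //.
suff : (m c < m b)%N by lia.
apply: (sub_count_lt (x := c)); rewrite ?posr_root ?pc ?lt_cb ?ltxx ?andbF //.
by move=> y /andP [-> /lt_trans ->].
Qed.

Lemma posr_sum_simple b : posr b ->
  exists l, [/\ all simple l, l != [::] & b = \sum_(x <- l) x].
Proof.
elim/posr_ind => {}b pb IH; case sb: (simple b).
  by exists [:: b]; rewrite /= sb big_seq1.
move: sb; rewrite /Defs.simple pb /= => /negbFE /hasP [c _ /andP [pc pbc]].
have := posr_gt0 pc; have := posr_gt0 pbc; rewrite dotBl => lt1 lt2.
have [l1 [sl1 _ e1]] := IH c pc ltac:(lra).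
have [l2 [sl2 nl2 e2]] := IH (b - c) pbc ltac:(rewrite dotBl; lra).
exists (l1 ++ l2); rewrite all_cat sl1 sl2 big_cat /= -e1 -e2 addrC subrK.
by split => //; case: (l1) nl2.
Qed.

Lemma dot_posr_ge0 x b :
  (forall a, simple a -> 0 <= dot x (coroot a)) -> posr b -> 0 <= dot x b.
Proof.
move=> x_dom /posr_sum_simple [l [sl _ ->]]; rewrite dot_sumr big_seq.
apply: sumr_ge0 => a al; have sa := allP sl a al.
by rewrite -coroot_ge0 ?simple_root ?x_dom.
Qed.

Lemma root_sub_acute a c : a \in rs -> c \in rs -> a != c -> 0 < dot a c ->
  a - c \in rs.
Proof.
move=> ar cr ac pos.
have A0 := dotxx_gt0 (root_neq0 ar); have B0 := dotxx_gt0 (root_neq0 cr).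
have noncol t : a != t *: c.
  apply/negP => /eqP eat; move: (ar); rewrite eat => /(root_scale cr) [t1|t1].
    by move: ac; rewrite eat t1 scale1r eqxx.
  by move: pos; rewrite eat t1 scaleN1r dotNl; lra.
have CS := sqr_dot_lt (root_neq0 cr) noncol.
have [z1 e1] := root_cartan_int cr ar.
have [z2 e2] := root_cartan_int ar cr.
have z1_gt0 : (0 < z1)%R by rewrite -(ltr0z R) -e1 coroot_gt0.
have z2_gt0 : (0 < z2)%R by rewrite -(ltr0z R) -e2 coroot_gt0 // dotC.
have z12 : (z1 * z2 < 4)%R.
  rewrite -(ltr_int R) intrM -e1 -e2 !dot_coroot (dotC c a).
  rewrite -(ltr_pM2r (mulr_gt0 A0 B0)).
  have -> : 2 / dot c c * dot a c * (2 / dot a a * dot a c) * (dot a a * dot c c)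
          = 4 * dot a c ^+ 2 by field; rewrite !gt_eqF.
  by rewrite -[4%:~R]/4 ltr_pM2l.
have [z1E|z2E] : z1 = 1 \/ z2 = 1 by lia.
  by move: (root_refl cr ar); rewrite mul_refl /sact e1 z1E scale1r.
by move: (root_refl ar cr); rewrite mul_refl /sact e2 z2E scale1r -rootN opprB.
Qed.

Lemma simple_obtuse a c : simple a -> simple c -> a != c -> dot a c <= 0.
Proof.
move=> sa sc ac; rewrite leNgt; apply/negP.
move=> /(root_sub_acute (simple_root sa) (simple_root sc) ac) acr.
case/orP: (posrVnegr acr) => [pac|nac].
  by case/andP: sa => _ /hasP []; exists c; rewrite ?simple_root // simple_posr.
case/andP: sc => _ /hasP []; exists a; rewrite ?simple_root //.
by rewrite simple_posr //= -opprB posrN.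
Qed.

(* Simple roots are not known to be linearly independent; the obtuseness of distinct
   simple roots takes its place. *)
Lemma sum_simple_collinear l a (k : R) : all simple l -> simple a ->
  \sum_(x <- l) x = k *: a -> all (pred1 a) l.
Proof.
move=> sl sa; rewrite (bigID (pred1 a)) /= (eq_bigr (fun=> a)) => [|x /eqP //].
rewrite big_const_seq iter_addr_0 -scaler_nat; set X := \sum_(x <- l | _) x.
set m := (count _ l)%:R => sumE.
have eX : X = (k - m) *: a by rewrite scalerBl -sumE [_ + X]addrC addrK.
apply/negPn/negP; rewrite -has_predC => has_l.
have Xxi : 0 < dot X xi.
  rewrite dot_suml big_seq_cond; apply: psumr_gt0 => [x /andP [xl _]|].
    by rewrite ltW ?posr_gt0 ?simple_posr ?(allP sl).
  case/hasP: has_l => x xl /= xa; apply/hasP; exists x => //.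
  by rewrite xl xa posr_gt0 ?simple_posr ?(allP sl).
have t_gt0 : 0 < k - m.
  by move: Xxi; rewrite eX dotZl pmulr_lgt0 ?posr_gt0 ?simple_posr.
have aX : dot a X <= 0.
  rewrite dot_sumr big_seq_cond; apply: sumr_le0 => x /andP [xl xa].
  by apply: simple_obtuse; rewrite // ?(allP sl) // eq_sym.
have X0 : X != 0 by apply: contraTneq Xxi => ->; rewrite dot0l ltxx.
by have := dotxx_gt0 X0; rewrite {1}eX dotZl ltNge mulr_ge0_le0 // ltW.
Qed.

Lemma posr_refl_simple a b : simple a -> posr b -> b != a -> posr (b *m refl a).
Proof.
move=> sa pb ba; have ar := simple_root sa.
case/orP: (posrVnegr (root_refl ar (posr_root pb))) => // nsb.
set k := dot b (coroot a).
have pd : posr (k *: a - b) by rewrite -opprB posrN; move: nsb; rewrite mul_refl.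
have [l1 [sl1 _ e1]] := posr_sum_simple pb.
have [l2 [sl2 _ e2]] := posr_sum_simple pd.
have : all (pred1 a) (l1 ++ l2).
  apply: (@sum_simple_collinear _ _ k); rewrite ?all_cat ?sl1 ?sl2 //.
  by rewrite big_cat /= -e1 -e2 addrC subrK.
rewrite all_cat => /andP [/all_pred1P l1E _].
move: e1; rewrite l1E big_nseq iter_addr_0 -scaler_nat => e1.
have := @root_scale a (size l1)%:R ar; rewrite -e1 => /(_ (posr_root pb)) [m1|m1].
  by move: ba; rewrite e1 m1 scale1r eqxx.
by have := ler0n R (size l1); rewrite m1; lra.
Qed.

Lemma weyl_orthogonal g : weyl rs g -> orthogonal_mx g.
Proof.
elim=> [|a w ar _ IH]; first exact: orthogonal_mx1.
exact/orthogonal_mxM/IH/orthogonal_refl/root_neq0.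
Qed.

Lemma weyl_invmx g : weyl rs g -> invmx g = g^T.
Proof. by move/weyl_orthogonal/orthogonal_invmx. Qed.

Lemma weyl_mulmxK g x : weyl rs g -> x *m g *m g^T = x.
Proof. by move/weyl_orthogonal => gg; rewrite -mulmxA gg mulmx1. Qed.

Lemma weyl_mulmxKV g x : weyl rs g -> x *m g^T *m g = x.
Proof. by move/weyl_orthogonal/orthogonal_mxT => gg; rewrite -mulmxA gg mulmx1. Qed.

Lemma weyl_root g a : weyl rs g -> a \in rs -> a *m g \in rs.
Proof.
move=> wg; elim: wg a => [|b w br _ IH] a ar; first by rewrite mulmx1.
by rewrite mulmxA IH // root_refl.
Qed.

Lemma weyl_mul g h : weyl rs g -> weyl rs h -> weyl rs (g *m h).
Proof.
by move=> wg wh; elim: wg => [|b w br _ IH]; rewrite ?mul1mx // -mulmxA; constructor.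
Qed.

Lemma weyl_refl a : a \in rs -> weyl rs (refl a).
Proof. by move=> ar; rewrite -[refl a]mulmx1; apply: weylS => //; apply: weyl1. Qed.

Lemma weyl_trmx g : weyl rs g -> weyl rs g^T.
Proof.
elim=> [|b w br _ IH]; first by rewrite trmx1; constructor.
by rewrite trmx_mul trmx_refl; apply: weyl_mul => //; apply: weyl_refl.
Qed.

Lemma weyl_root_trmx g a : weyl rs g -> a \in rs -> a *m g^T \in rs.
Proof. by move/weyl_trmx; apply: weyl_root. Qed.

Lemma count_root_refl a (p : pred 'rV[R]_n) : a \in rs ->
  count p rs = count (fun b => p (b *m refl a)) rs.
Proof.
move=> ar; have a0 := root_neq0 ar.
have reflK : involutive (fun b => b *m refl a).
  by move=> b; rewrite -mulmxA refl_invol // mulmx1.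
rewrite -(count_map (fun b => b *m refl a)); apply/permP/uniq_perm.
- exact: root_uniq.
- by rewrite map_inj_uniq ?root_uniq //; apply: inv_inj.
move=> b; apply/idP/mapP => [br|[c cr ->]]; last exact: root_refl.
by exists (b *m refl a); rewrite ?root_refl // reflK.
Qed.

Definition word_mx s : 'M[R]_n := foldr (fun a g => refl a *m g) 1%:M s.

Lemma word_mx_cat s1 s2 : word_mx (s1 ++ s2) = word_mx s1 *m word_mx s2.
Proof. by elim: s1 => [|a s IH] /=; rewrite ?mul1mx // IH mulmxA. Qed.

Lemma trmx_word_mx s : (word_mx s)^T = word_mx (rev s).
Proof.
elim: s => [|a s IH] /=; first by rewrite trmx1.
by rewrite trmx_mul IH trmx_refl rev_cons -cats1 word_mx_cat /= mulmx1.
Qed.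

Lemma word_mx_weyl s : all simple s -> weyl rs (word_mx s).
Proof.
elim: s => [|a s IH] /=; first by constructor.
by case/andP => sa /IH; constructor => //; apply: simple_root.
Qed.

Lemma posr_simple_conj b : posr b ->
  exists s a, [/\ all simple s, simple a & b = a *m word_mx s].
Proof.
elim/posr_ind => {}b pb IH; case sb: (simple b).
  by exists [::], b; rewrite /= mulmx1.
have [l [sl _ eb]] := posr_sum_simple pb.
have /hasP [x xl bx] : has (fun x => 0 < dot b x) l.
  apply/negPn/negP; rewrite -all_predC => /allP b_le0.
  have : 0 < dot b b by rewrite dotxx_gt0 ?root_neq0 ?posr_root.
  rewrite {2}eb dot_sumr big_seq ltNge sumr_le0 // => x /b_le0 /=.
  by rewrite leNgt.
have sx := allP sl x xl; have xr := simple_root sx.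
have pbx : posr (b *m refl x).
  by apply: posr_refl_simple => //; apply: contraFneq sb => ->.
have [|s [a [ss sa ebx]]] := IH _ pbx.
  rewrite mul_refl /sact dotBl dotZl ltrBlDr ltrDl mulr_gt0 ?coroot_gt0 //.
  exact/posr_gt0/simple_posr.
exists (rcons s x), a; rewrite all_rcons sx ss -cats1 word_mx_cat /= mulmx1.
by rewrite mulmxA -ebx -mulmxA refl_invol ?mulmx1 ?root_neq0.
Qed.

Lemma weyl_word g : weyl rs g -> exists2 s, all simple s & g = word_mx s.
Proof.
elim=> [|a w ar _ [s ss ->]]; first by exists [::].
have [b pb ->] : exists2 b, posr b & refl a = refl b.
  by case/orP: (posrVnegr ar) => ?; [exists a | exists (- a); rewrite ?posrN ?refl_opp].
have [t [c [st sc ->]]] := posr_simple_conj pb.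
have tt := weyl_orthogonal (word_mx_weyl st).
exists (rev t ++ c :: t ++ s).
  by rewrite all_cat all_rev st /= sc all_cat st ss.
by rewrite refl_conj // trmx_word_mx word_mx_cat /= word_mx_cat !mulmxA.
Qed.

Lemma word_deletion s c : all simple s -> posr c -> negr (c *m word_mx s) ->
  exists s', [/\ all simple s', size s' = (size s).-1 &
                  refl c *m word_mx s = word_mx s'].
Proof.
elim: s c => [|a s IH] c /=.
  by move=> _ pc; rewrite mulmx1 negrNposr ?posr_root // pc.
case/andP => sa ss pc; have a0 := root_neq0 (simple_root sa).
have [-> _|ca] := eqVneq c a; first by exists s; rewrite mulmxA refl_invol ?mul1mx.
have pca := posr_refl_simple sa pc ca.
rewrite mulmxA => nca; have [s' [ss' s'E e]] := IH _ ss pca nca.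
exists (a :: s'); split; rewrite /= ?sa //.
  case: s {IH e} ss s'E nca => [|y s] _ /= ->; last by [].
  by rewrite mulmx1 negrNposr ?posr_root // pca.
have -> : refl c = refl a *m refl (c *m refl a) *m refl a.
  rewrite refl_conj ?trmx_refl; last exact: orthogonal_refl.
  rewrite !mulmxA refl_invol // mul1mx.
  by rewrite -mulmxA refl_invol // mulmx1.
by rewrite -e -!mulmxA [refl a *m (refl a *m _)]mulmxA refl_invol // mul1mx.
Qed.

Lemma word_mx_posr_stable_eq1 s : all simple s ->
  (forall b, posr b -> posr (b *m word_mx s)) -> word_mx s = 1%:M.
Proof.
move: {2}(size s) (erefl (size s)) => N; elim/ltn_ind: N s => N IH [|a s] //=.
move=> sizeE /andP [sa ss] stable; have ar := simple_root sa.
have asr : a *m word_mx s \in rs by apply: weyl_root => //; apply: word_mx_weyl.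
have nas : negr (a *m word_mx s).
  rewrite negrNposr //; apply/negP => pas.
  have := stable a (simple_posr sa).
  by rewrite mulmxA mul_refl sact_id ?root_neq0 // mulNmx posrN negrNposr // pas.
have [s' [ss' s'E e]] := word_deletion ss (simple_posr sa) nas.
rewrite e; apply: (IH (size s')) => //; first by rewrite -sizeE s'E ltnS leq_pred.
by move=> b /stable; rewrite e.
Qed.

Lemma weyl_posr_stable_eq1 g : weyl rs g ->
  (forall b, posr b -> posr (b *m g)) -> g = 1%:M.
Proof. by case/weyl_word => s ss ->; apply: word_mx_posr_stable_eq1. Qed.

Lemma is_intRD (x y : R) : is_intR x -> is_intR y -> is_intR (x + y).
Proof. by move=> [a ->] [b ->]; exists (a + b); rewrite intrD. Qed.

Lemma is_intRN (x : R) : is_intR x -> is_intR (- x).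
Proof. by move=> [a ->]; exists (- a); rewrite mulrNz. Qed.

Lemma weightD x y : weight rs x -> weight rs y -> weight rs (x + y).
Proof. by move=> wx wy a ar; rewrite dotDl; apply: is_intRD; [apply: wx | apply: wy]. Qed.

Lemma weightB x y : weight rs x -> weight rs y -> weight rs (x - y).
Proof.
by move=> wx wy a ar; rewrite dotBl; apply/is_intRD/is_intRN; [apply: wx | apply: wy].
Qed.

Lemma weight_sum (I : Type) (r : seq I) (P : pred I) (F : I -> 'rV[R]_n) :
  (forall i, P i -> weight rs (F i)) -> weight rs (\sum_(i <- r | P i) F i).
Proof.
move=> wF; elim/big_rec: _ => [a _|i x Pi wx]; last by apply: weightD => //; apply: wF.
by exists 0; rewrite dot0l.
Qed.

Lemma weight_mul g x : weyl rs g -> weight rs x -> weight rs (x *m g).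
Proof.
move=> wg wx a ar; rewrite dot_mulmxl -coroot_orthogonal.
  by apply/wx/weyl_root_trmx.
exact/orthogonal_trmx/weyl_orthogonal.
Qed.

(* [lex_pos mu c]: c is positive for the functional mu + eps xi, eps > 0 small. *)
Definition lex_pos mu c := (0 < dot mu c) || ((dot mu c == 0) && (0 < dot c xi)).

Lemma lex_pos_ge0 mu c : lex_pos mu c -> 0 <= dot mu c.
Proof. by case/orP => [/ltW //|/andP [/eqP -> _]]. Qed.

Lemma lex_posN mu c : c \in rs -> lex_pos mu (- c) = ~~ lex_pos mu c.
Proof.
move=> cr; rewrite /lex_pos dotNr dotNl oppr_gt0 oppr_eq0 oppr_gt0.
have := xi_reg cr; case: (ltgtP (dot mu c) 0) => //= _.
by case: (ltgtP (dot c xi) 0).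
Qed.

Lemma lex_pos_sum (I : eqType) (r : seq I) (F : I -> 'rV[R]_n) mu :
  r != [::] -> all (fun i => lex_pos mu (F i)) r -> lex_pos mu (\sum_(i <- r) F i).
Proof.
move=> nr /allP lpF; have mu_ge0 i : i \in r -> 0 <= dot mu (F i).
  by move/lpF/lex_pos_ge0.
rewrite /lex_pos dot_sumr dot_suml !big_seq.
have : 0 <= \sum_(i <- r | i \in r) dot mu (F i) by apply: sumr_ge0.
rewrite le_eqVlt => /orP [/eqP mu0|->] //; rewrite -mu0 ltxx eqxx /=.
move: mu0 => /esym/eqP; rewrite psumr_eq0 // => /allP mu0.
have xi_gt0 i : i \in r -> 0 < dot (F i) xi.
  move=> ir; have /implyP/(_ ir)/eqP mu_i0 := mu0 i ir.
  by case/orP: (lpF i ir) => [|/andP []]; rewrite mu_i0 ?ltxx.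
apply: psumr_gt0 => [i /xi_gt0 /ltW //|].
case: r nr xi_gt0 {lpF mu_ge0 mu0} => // i r _ xi_gt0.
by apply/hasP; exists i; rewrite ?mem_head ?xi_gt0 ?mem_head.
Qed.

Lemma lex_pos_posr mu g b : (forall a, simple a -> lex_pos mu (a *m g)) ->
  posr b -> lex_pos mu (b *m g).
Proof.
move=> lp_simple /posr_sum_simple [l [sl nl ->]]; rewrite mulmx_suml.
by apply: lex_pos_sum => //; apply/allP => a al; apply/lp_simple/(allP sl).
Qed.

Section Steinberg.
Variable fw : 'rV[R]_n -> 'rV[R]_n.
Hypothesis fwP : fund_weights rs xi fw.

Local Notation steinberg := (steinberg rs xi fw).

Lemma steinberg_weight v : weight rs (steinberg v).
Proof. by apply: weight_sum => a /andP [/fwP []]. Qed.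

Lemma dot_steinberg_coroot v a : simple a ->
  dot (steinberg v) (coroot a) = (negr (a *m invmx v))%:R.
Proof.
move=> sa; rewrite /steinberg dot_suml (eq_bigr (fun b => (b == a)%:R)).
  by rewrite sum_indicator_uniq ?root_uniq // sa simple_root // andbT.
by move=> b /andP [/fwP [_ ->]].
Qed.

Lemma dominant_steinberg_add v sg : dominant rs xi sg ->
  dominant rs xi (steinberg v + sg).
Proof.
case=> wsg sg_dom; split; first exact: weightD (steinberg_weight v) wsg.
by move=> a sa; rewrite dotDl dot_steinberg_coroot // addr_ge0 ?sg_dom.
Qed.

Lemma fI_dominantI J v sg : WI rs xi J v -> dominant rs xi sg ->
  dominantI rs xi J (fI rs xi fw v sg).
Proof.
case=> wv v_pos /(dominant_steinberg_add v) [nu_w nu_dom].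
rewrite /fI /wact weyl_invmx //; split; first exact: weight_mul (weyl_trmx wv) nu_w.
by move=> a /v_pos pa; rewrite dot_mulmxl trmxK dot_posr_ge0.
Qed.

Lemma steinberg_dot0_simple v sg x : weyl rs v -> dominant rs xi sg ->
  simple x -> dot (steinberg v + sg) x = 0 -> posr (x *m v^T).
Proof.
move=> wv [_ sg_dom] sx; have xr := simple_root sx.
move/eqP; rewrite -coroot_eq0 // dotDl dot_steinberg_coroot //.
rewrite paddr_eq0 ?ler0n ?sg_dom // pnatr_eq0 eqb0 => /andP [+ _].
by rewrite weyl_invmx // negrNposr ?negbK ?weyl_root_trmx.
Qed.

Lemma steinberg_dot0_posr v sg d : weyl rs v -> dominant rs xi sg ->
  posr d -> dot (steinberg v + sg) d = 0 -> posr (d *m v^T).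
Proof.
move=> wv sgd pd; have [_ nu_dom] := dominant_steinberg_add v sgd.
have [l [sl nl dE]] := posr_sum_simple pd.
have nu_l x : x \in l -> 0 <= dot (steinberg v + sg) x.
  by move=> xl; rewrite dot_posr_ge0 ?simple_posr ?(allP sl).
rewrite {1}dE dot_sumr big_seq => /eqP; rewrite psumr_eq0 // => /allP nu_l0.
have pl x : x \in l -> posr (x *m v^T).
  move=> xl; apply: (steinberg_dot0_simple wv sgd); first exact: (allP sl).
  by have := nu_l0 x xl; rewrite xl => /eqP.
rewrite /Defs.posr weyl_root_trmx ?posr_root //= dE mulmx_suml dot_suml big_seq.
apply: psumr_gt0 => [x /pl /posr_gt0 /ltW //|].
case: l nl pl {sl dE nu_l nu_l0} => // x l _ pl.
by apply/hasP; exists x; rewrite mem_head //=; apply/posr_gt0/pl/mem_head.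
Qed.

Lemma steinberg_dot0_root v sg c : weyl rs v -> dominant rs xi sg -> c \in rs ->
  dot (steinberg v + sg) (c *m v) = 0 -> posr (c *m v) = posr c.
Proof.
move=> wv sgd cr nu0; have cvr := weyl_root wv cr.
case/orP: (posrVnegr cvr) => [pcv|ncv].
  by rewrite pcv; have := steinberg_dot0_posr wv sgd pcv nu0; rewrite weyl_mulmxK.
have pcv : posr (- (c *m v)) by rewrite posrN.
have := steinberg_dot0_posr wv sgd pcv; rewrite dotNr nu0 oppr0 => /(_ erefl).
rewrite mulNmx weyl_mulmxK // posrN => nc.
by move: ncv nc; rewrite !negrNposr // => /negbTE -> /negbTE ->.
Qed.

Lemma posr_mul_lex_pos v sg c : weyl rs v -> dominant rs xi sg -> c \in rs ->
  posr (c *m v) = lex_pos (fI rs xi fw v sg) c.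
Proof.
move=> wv sgd cr; have [_ nu_dom] := dominant_steinberg_add v sgd.
have cvr := weyl_root wv cr.
rewrite /fI /wact weyl_invmx // /lex_pos dot_mulmxl trmxK.
have [nu_gt0|nu_lt0|nu0] := ltgtP 0 (dot (steinberg v + sg) (c *m v)) => /=.
- apply: contraTT nu_gt0; rewrite -negrNposr // -posrN -leNgt.
  by move=> /(dot_posr_ge0 nu_dom); rewrite dotNr oppr_ge0.
- by apply/negbTE/(contraTN _ nu_lt0) => /(dot_posr_ge0 nu_dom); rewrite leNgt.
- by rewrite (steinberg_dot0_root wv sgd cr (esym nu0)) /Defs.posr cr.
Qed.

Lemma fI_inj v1 sg1 v2 sg2 :
  weyl rs v1 -> dominant rs xi sg1 -> weyl rs v2 -> dominant rs xi sg2 ->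
  fI rs xi fw v1 sg1 = fI rs xi fw v2 sg2 -> v1 = v2 /\ sg1 = sg2.
Proof.
move=> wv1 d1 wv2 d2 eq_fI.
have u1 : v1^T *m v2 = 1%:M.
  apply: weyl_posr_stable_eq1 => [|b pb]; first by apply: weyl_mul => //; apply: weyl_trmx.
  have br : b *m v1^T \in rs by apply: weyl_root_trmx => //; apply: posr_root.
  rewrite mulmxA (posr_mul_lex_pos wv2 d2) // -eq_fI.
  by rewrite -(posr_mul_lex_pos wv1 d1) // weyl_mulmxKV.
have v12 : v1 = v2 by rewrite -[v2]mul1mx -(weyl_orthogonal wv1) -mulmxA u1 mulmx1.
split => //; subst v2; have := congr1 (mulmx^~ v1) eq_fI.
by rewrite /fI /wact /= weyl_invmx // !weyl_mulmxKV // => /addrI.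
Qed.

Section Surjectivity.
Variable mu : 'rV[R]_n.

Definition lex_inversion w b := posr b && ~~ lex_pos mu (b *m w^T).

Lemma count_lex_inversion_refl w a : weyl rs w -> simple a -> lex_inversion w a ->
  (count (lex_inversion (w *m refl a)) rs < count (lex_inversion w) rs)%N.
Proof.
move=> ww sa inv_a; have ar := simple_root sa; have a0 := root_neq0 ar.
have wE b : b *m refl a *m (w *m refl a)^T = b *m w^T.
  by rewrite trmx_mul trmx_refl mulmxA -(mulmxA b) refl_invol // mulmx1.
rewrite (count_root_refl _ ar); apply: (sub_count_lt (x := a)) => //.
- move=> b; rewrite /lex_inversion /= wE => /andP [pba nlb]; rewrite nlb andbT.
  have br : b \in rs.
    by have := root_refl ar (posr_root pba); rewrite -mulmxA refl_invol // mulmx1.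
  case/orP: (posrVnegr br) => // nb; have [ba|ba] := eqVneq b (- a).
    move: nlb inv_a; rewrite ba mulNmx lex_posN ?weyl_root_trmx // negbK.
    by rewrite /lex_inversion => ->; rewrite andbF.
  have := @posr_refl_simple a (- b) sa; rewrite posrN nb -(inj_eq oppr_inj) opprK.
  by rewrite mulNmx posrN negrNposr ?posr_root // pba => /(_ isT ba).
- by rewrite /lex_inversion /= mul_refl sact_id // posrN negrNposr ?rootN // simple_posr.
Qed.

Lemma exists_weyl_lex_pos :
  exists2 v, weyl rs v & forall b, posr b -> lex_pos mu (b *m v^T).
Proof.
suff: forall N w, weyl rs w -> (count (lex_inversion w) rs < N)%N ->
    exists2 v, weyl rs v & forall b, posr b -> lex_pos mu (b *m v^T).
  by apply; [exact: weyl1 | exact: ltnSn].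
elim=> // N IH w ww; rewrite ltnS => cwN.
case h: (has (fun a => simple a && lex_inversion w a) rs).
  case/hasP: h => a _ /andP [sa inv_a].
  apply: (IH (w *m refl a)); first by apply: weyl_mul ww (weyl_refl (simple_root sa)).
  exact: leq_trans (count_lex_inversion_refl ww sa inv_a) cwN.
exists w => // b; apply: lex_pos_posr => a sa; apply/negPn/negP => nlp.
move/negP: h; apply; apply/hasP; exists a; first exact: simple_root.
by rewrite sa /lex_inversion simple_posr.
Qed.

Lemma lex_pos_WI J v : weyl rs v -> dominantI rs xi J mu ->
  (forall b, posr b -> lex_pos mu (b *m v^T)) -> WI rs xi J v.
Proof.
move=> wv [_ mu_J] lexv; split => // a pa; have mu_a := mu_J a pa.
case/andP: pa => /andP [ar _] pa.
case/orP: (posrVnegr (weyl_root wv ar)) => // nav.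
have := lexv (- (a *m v)); rewrite posrN mulNmx weyl_mulmxK // lex_posN // => /(_ nav).
by rewrite /lex_pos lt_def mu_a posr_gt0 // andbT; case: eqP.
Qed.

Lemma dominant_sub_steinberg v : weyl rs v -> weight rs mu ->
  (forall b, posr b -> lex_pos mu (b *m v^T)) ->
  dominant rs xi (mu *m v - steinberg v).
Proof.
move=> wv wmu lexv; split; first exact: weightB (weight_mul wv wmu) (steinberg_weight v).
move=> a sa; have ar := simple_root sa; have lpa := lexv a (simple_posr sa).
rewrite dotBl dot_steinberg_coroot // weyl_invmx //.
have nuE : dot (mu *m v) a = dot mu (a *m v^T) by rewrite dot_mulmxl.
case na: (negr (a *m v^T)); last by rewrite subr0 coroot_ge0 // nuE lex_pos_ge0.
have : 0 < dot (mu *m v) a.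
  move: lpa; rewrite /lex_pos nuE => /orP [//|/andP [_ xi_gt0]].
  by case/andP: na => _ /lt_trans/(_ xi_gt0); rewrite ltxx.
rewrite -(coroot_gt0 _ ar) subr_ge0; have [z ->] := weight_mul wv wmu ar.
by rewrite ltr0z -[true%:R]/((1 : int)%:~R) ler_int.
Qed.

Lemma fI_surj J : dominantI rs xi J mu ->
  exists v sigma, [/\ WI rs xi J v, dominant rs xi sigma & fI rs xi fw v sigma = mu].
Proof.
move=> mu_J; have [v wv lexv] := exists_weyl_lex_pos.
exists v, (mu *m v - steinberg v); split; first exact: lex_pos_WI.
  by apply: dominant_sub_steinberg => //; case: mu_J.
by rewrite /fI /wact weyl_invmx // addrC subrK weyl_mulmxK.
Qed.

End Surjectivity.

End Steinberg.

End RootSystem.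

Unset Implicit Arguments. Set Strict Implicit.

Theorem mainTheorem1 (R : realType) (n : nat) (rs : seq 'rV[R]_n)
    (xi : 'rV[R]_n) (J : seq 'rV[R]_n) (fw : 'rV[R]_n -> 'rV[R]_n) :
  root_system rs -> regular rs xi ->
  (forall a, a \in J -> simple rs xi a) ->
  fund_weights rs xi fw ->
  (* well defined *)
  (forall v sigma, WI rs xi J v -> dominant rs xi sigma ->
     dominantI rs xi J (fI rs xi fw v sigma)) /\
  (* injective *)
  (forall v1 s1 v2 s2, WI rs xi J v1 -> dominant rs xi s1 ->
     WI rs xi J v2 -> dominant rs xi s2 ->
     fI rs xi fw v1 s1 = fI rs xi fw v2 s2 -> v1 = v2 /\ s1 = s2) /\
  (* surjective *)
  (forall mu, dominantI rs xi J mu ->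
     exists v sigma, [/\ WI rs xi J v, dominant rs xi sigma &
                         fI rs xi fw v sigma = mu]).
Proof.
move=> rsP xi_reg _ fwP; split; first exact: fI_dominantI.
split; first by move=> v1 s1 v2 s2 [wv1 _] d1 [wv2 _] d2; apply: fI_inj.
by move=> mu; apply: fI_surj.
Qed.
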